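(* Let $\mathcal H\subseteq\mathrm{Hol}(\mathbb B_d,\mathbb C^n)$ be a reproducing kernel Hilbert space in which the $\mathbb C^n$-valued polynomials are dense, and suppose $\langle\boldsymbol z^\alpha\otimes\boldsymbol\xi,\boldsymbol z^\beta\otimes\boldsymbol\eta\rangle=0$ for all $\alpha\ne\beta$ in $\mathbb Z_+^d$ and all $\boldsymbol\xi,\boldsymbol\eta\in\mathbb C^n$. If the $d$-tuple $\boldsymbol M$ of multiplication by the coordinate functions on $\mathcal H$ is $\mathcal U(d)$-homogeneous, then there is a sequence $\{A_\ell\}_{\ell\in\mathbb Z_+}$ of positive definite $n\times n$ matrices such that $$\|\boldsymbol z^\alpha\otimes\boldsymbol\xi\|^2=\alpha!\,\langle A_{|\alpha|}\boldsymbol\xi,\boldsymbol\xi\rangle,\qquad\alpha\in\mathbb Z_+^d,\ \boldsymbol\xi\in\mathbb C^n.$$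
   Context: $\mathbb B_d$ is the unit ball of $\mathbb C^d$, $\boldsymbol z^\alpha\otimes\boldsymbol\xi$ denotes the function $\boldsymbol z\mapsto\boldsymbol z^\alpha\boldsymbol\xi$, $\alpha!=\alpha_1!\cdots\alpha_d!$, $|\alpha|=\alpha_1+\cdots+\alpha_d$. The (bounded, commuting) tuple $\boldsymbol M=(M_{z_1},\ldots,M_{z_d})$ is $\mathcal U(d)$-homogeneous if for every $u=(u_{jk})\in\mathcal U(d)$ there is a unitary $\Gamma(u)$ on $\mathcal H$ with $M_{z_j}\Gamma(u)=\Gamma(u)\sum_{k}u_{jk}M_{z_k}$ for $j=1,\ldots,d$. *)

From HB Require Import structures.
From mathcomp Require Import all_boot all_order all_algebra.
From mathcomp Require Import reals.
From mathcomp Require Import complex.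
Set Implicit Arguments.
Unset Strict Implicit.
Unset Printing Implicit Defensive.
Import Order.TTheory GRing.Theory Num.Theory.
Local Open Scope ring_scope.

Section Defs.
Variables (R : realType) (d n : nat).
Local Notation C := (R[i]).

Definition point := 'rV[C]_d.
(* functions B_d -> C^n, represented as total functions that vanish off B_d *)
Definition Fun := point -> 'cV[C]_n.

Definition in_ball (z : point) : bool := \sum_(j < d) `|z 0 j| ^+ 2 < 1.

Definition ext0 (g : Fun) : Fun := fun z => if in_ball z then g z else 0.

Definition mindex := 'I_d -> nat.
Definition mfact (a : mindex) : nat := \prod_(j < d) (a j)`!.
Definition mdeg (a : mindex) : nat := \sum_(j < d) a j.
Definition zpow (z : point) (a : mindex) : C := \prod_(j < d) (z 0 j) ^+ (a j).

Definition monom (a : mindex) (xi : 'cV[C]_n) : Fun :=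
  ext0 (fun z => zpow z a *: xi).

Definition is_poly (f : Fun) : Prop :=
  exists s : seq (mindex * 'cV[C]_n),
    f = ext0 (fun z => \sum_(p <- s) zpow z p.1 *: p.2).

Definition cdot (x y : 'cV[C]_n) : C := \sum_(i < n) x i 0 * (y i 0)^*.

Definition adj {k m : nat} (A : 'M[C]_(k, m)) : 'M[C]_(m, k) := (map_mx Num.conj A)^T.

Definition posdef (A : 'M[C]_n) : Prop :=
  adj A = A /\ forall xi : 'cV[C]_n, xi != 0 -> 0 < cdot (A *m xi) xi.

Definition unitary_mx (u : 'M[C]_d) : Prop := u *m adj u = 1%:M /\ adj u *m u = 1%:M.

Definition holo (f : Fun) : Prop :=
  forall z : point, in_ball z -> forall i : 'I_n,
    exists L : 'rV[C]_d, forall eps : C, 0 < eps -> exists2 delta : C, 0 < delta &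
      forall h : point, \sum_(j < d) `|h 0 j| < delta ->
        `|f (z + h) i 0 - f z i 0 - \sum_(j < d) L 0 j * h 0 j|
          <= eps * \sum_(j < d) `|h 0 j|.

Definition Mz (j : 'I_d) (f : Fun) : Fun := fun z => z 0 j *: f z.

Definition is_RKHS_hol (S : Fun -> Prop) (ip : Fun -> Fun -> C) : Prop :=
  [/\
      [/\ S (fun _ => 0),
      (forall a f g, S f -> S g -> S (fun z => a *: f z + g z)) &
      (forall f, S f -> holo f /\ forall z, ~~ in_ball z -> f z = 0)],
      [/\ (forall a f g h, S f -> S g -> S h ->
             ip (fun z => a *: f z + g z) h = a * ip f h + ip g h),
          (forall f g, S f -> S g -> ip g f = (ip f g)^*) &
          (forall f, S f -> f <> (fun _ => 0) -> 0 < ip f f)],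
      (forall u : nat -> Fun, (forall m, S (u m)) ->
        (forall eps : C, 0 < eps -> exists N, forall m k, (N <= m)%N -> (N <= k)%N ->
           ip (fun z => u m z - u k z) (fun z => u m z - u k z) < eps) ->
        exists2 g, S g & forall eps : C, 0 < eps -> exists N, forall m, (N <= m)%N ->
           ip (fun z => u m z - g z) (fun z => u m z - g z) < eps) &
      exists K : point -> point -> 'M[C]_n,
        forall w : point, in_ball w -> forall xi : 'cV[C]_n,
          S (ext0 (fun z => K z w *m xi)) /\
          forall f, S f -> ip f (ext0 (fun z => K z w *m xi)) = cdot (f w) xi].

Definition poly_dense (S : Fun -> Prop) (ip : Fun -> Fun -> C) : Prop :=
  (forall f, is_poly f -> S f) /\
  forall f, S f -> forall eps : C, 0 < eps -> exists2 p, is_poly p &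
    ip (fun z => f z - p z) (fun z => f z - p z) < eps.

Definition M_bounded (S : Fun -> Prop) (ip : Fun -> Fun -> C) : Prop :=
  forall j : 'I_d, (forall f, S f -> S (Mz j f)) /\
    exists c : C, forall f, S f -> ip (Mz j f) (Mz j f) <= c * ip f f.

Definition unitary_op (S : Fun -> Prop) (ip : Fun -> Fun -> C) (G : Fun -> Fun) : Prop :=
  [/\ (forall f, S f -> S (G f)),
      (forall a f g, S f -> S g -> G (fun z => a *: f z + g z) = (fun z => a *: G f z + G g z)),
      (forall f g, S f -> S g -> ip (G f) (G g) = ip f g) &
      (forall g, S g -> exists2 f, S f & G f = g)].

Definition Ud_homogeneous (S : Fun -> Prop) (ip : Fun -> Fun -> C) : Prop :=
  forall u : 'M[C]_d, unitary_mx u ->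
    exists G : Fun -> Fun, unitary_op S ip G /\
      forall (j : 'I_d) f, S f ->
        Mz j (G f) = G (fun z => \sum_(k < d) u j k *: Mz k f z).

End Defs.

(* For the rotation u_x of the (z_i, z_j)-plane by the angle arctan x, the
   unitary Gamma(u_x) fixes the constants, hence maps the product of rotated
   coordinates prod_{k in s} (u_x z)_k (x) xi to a monomial of multidegree
   count(s).  Such products with different multidegrees are therefore
   orthogonal for every x >= 0.  Expanded in x this is a polynomial identity,
   and its coefficient of x gives
     (a_i + 1) |z^a (x) xi|^2 = a_j |z^(a - e_j + e_i) (x) xi|^2.
   Moving all the degree onto the first coordinate yields
     |z^a (x) xi|^2 = a! / |a|! * |z_1^|a| (x) xi|^2,
   so A_l is the Gram matrix of z_1^l divided by l!. *)

From HB Require Import structures.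
From mathcomp Require Import all_boot all_order all_algebra.
From mathcomp Require Import reals.
From mathcomp Require Import complex.
From mathcomp Require Import ring zify.
From Stdlib Require Import FunctionalExtensionality Classical.
Import Order.TTheory GRing.Theory Num.Theory.
Local Open Scope ring_scope.

Set Implicit Arguments.
Unset Strict Implicit.
Unset Printing Implicit Defensive.

Section InnerProduct.
Variables (K : numClosedFieldType) (T : Type) (V : lmodType K).

Definition inner_product_space (S : (T -> V) -> Prop) (ip : (T -> V) -> (T -> V) -> K) :=
  [/\ S (fun _ => 0),
      forall a f g, S f -> S g -> S (fun z => a *: f z + g z),
      forall a f g h, S f -> S g -> S h ->
        ip (fun z => a *: f z + g z) h = a * ip f h + ip g h,
      forall f g, S f -> S g -> ip g f = (ip f g)^* &
      forall f, S f -> f <> (fun _ => 0) -> 0 < ip f f].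

Variables (S : (T -> V) -> Prop) (ip : (T -> V) -> (T -> V) -> K).
Hypothesis hS : inner_product_space S ip.

Lemma subspace0 : S (fun _ => 0).
Proof. by case: hS. Qed.

Lemma subspace_comb a f g : S f -> S g -> S (fun z => a *: f z + g z).
Proof. by case: hS => _ comb _ _ _; apply: comb. Qed.

Lemma subspaceZ a f : S f -> S (fun z => a *: f z).
Proof.
move=> Sf; rewrite (_ : (fun z => _) = fun z => a *: f z + 0).
  exact: subspace_comb Sf subspace0.
by apply: functional_extensionality => z; rewrite addr0.
Qed.

Lemma subspaceD f g : S f -> S g -> S (fun z => f z + g z).
Proof.
move=> Sf Sg; rewrite (_ : (fun z => _) = fun z => 1 *: f z + g z).
  exact: subspace_comb.
by apply: functional_extensionality => z; rewrite scale1r.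
Qed.

Lemma subspaceB f g : S f -> S g -> S (fun z => f z - g z).
Proof.
move=> Sf Sg; rewrite (_ : (fun z => _) = fun z => (-1) *: g z + f z).
  exact: subspace_comb.
by apply: functional_extensionality => z; rewrite scaleN1r addrC.
Qed.

Lemma subspace_sum (I : Type) (r : seq I) (c : I -> K) (F : I -> T -> V) :
  (forall i, S (F i)) -> S (fun z => \sum_(i <- r) c i *: F i z).
Proof.
move=> SF; elim: r => [|i r IH].
  by under [fun z => _]functional_extensionality do rewrite big_nil; exact: subspace0.
under [fun z => _]functional_extensionality do rewrite big_cons.
exact: subspace_comb.
Qed.

Lemma ip_combl a f g h : S f -> S g -> S h ->
  ip (fun z => a *: f z + g z) h = a * ip f h + ip g h.
Proof. by case: hS => _ _ lin _ _; apply: lin. Qed.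

Lemma ip_conj f g : S f -> S g -> ip g f = (ip f g)^*.
Proof. by case: hS => _ _ _ conj _; apply: conj. Qed.

Lemma ip_gt0 f : S f -> f <> (fun _ => 0) -> 0 < ip f f.
Proof. by case: hS => _ _ _ _ pos; apply: pos. Qed.

Lemma ip0l h : S h -> ip (fun _ => 0) h = 0.
Proof.
move=> Sh; have := ip_combl 1 subspace0 subspace0 Sh.
under [fun z => _]functional_extensionality do rewrite scale1r addr0.
by rewrite mul1r => /eqP; rewrite addrC -subr_eq subrr eq_sym => /eqP.
Qed.

Lemma ipZl a f h : S f -> S h -> ip (fun z => a *: f z) h = a * ip f h.
Proof.
move=> Sf Sh; have := ip_combl a Sf subspace0 Sh.
by under [fun z => _]functional_extensionality do rewrite addr0; rewrite ip0l ?addr0.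
Qed.

Lemma ipBl f g h : S f -> S g -> S h -> ip (fun z => f z - g z) h = ip f h - ip g h.
Proof.
move=> Sf Sg Sh; have := ip_combl (-1) Sg Sf Sh.
under [fun z => _]functional_extensionality do rewrite scaleN1r addrC.
by rewrite mulN1r addrC.
Qed.

Lemma ip_suml (I : Type) (r : seq I) (c : I -> K) (F : I -> T -> V) h :
  (forall i, S (F i)) -> S h ->
  ip (fun z => \sum_(i <- r) c i *: F i z) h = \sum_(i <- r) c i * ip (F i) h.
Proof.
move=> SF Sh; elim: r => [|i r IH].
  by under [fun z => _]functional_extensionality do rewrite big_nil; rewrite ip0l ?big_nil.
under [fun z => _]functional_extensionality do rewrite big_cons.
by rewrite ip_combl ?IH ?big_cons //; exact: subspace_sum.
Qed.

Lemma ipZr a f h : S f -> S h -> ip h (fun z => a *: f z) = a^* * ip h f.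
Proof.
by move=> Sf Sh; rewrite ip_conj ?ipZl ?rmorphM /= -?ip_conj //; exact: subspaceZ.
Qed.

Lemma ipBr f g h : S f -> S g -> S h -> ip h (fun z => f z - g z) = ip h f - ip h g.
Proof.
by move=> Sf Sg Sh; rewrite ip_conj ?ipBl ?rmorphB /= -?ip_conj //; exact: subspaceB.
Qed.

Lemma ip_sumr (I : Type) (r : seq I) (c : I -> K) (F : I -> T -> V) h :
  (forall i, S (F i)) -> S h ->
  ip h (fun z => \sum_(i <- r) c i *: F i z) = \sum_(i <- r) (c i)^* * ip h (F i).
Proof.
move=> SF Sh; rewrite ip_conj ?ip_suml ?rmorph_sum //; last exact: subspace_sum.
by apply: eq_bigr => i _; rewrite rmorphM /= -ip_conj.
Qed.

Lemma ip_sum_sum (I J : Type) (r1 : seq I) (r2 : seq J) (c1 : I -> K) (c2 : J -> K)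
    (F1 : I -> T -> V) (F2 : J -> T -> V) :
  (forall i, S (F1 i)) -> (forall j, S (F2 j)) ->
  ip (fun z => \sum_(i <- r1) c1 i *: F1 i z) (fun z => \sum_(j <- r2) c2 j *: F2 j z) =
  \sum_(i <- r1) \sum_(j <- r2) c1 i * (c2 j)^* * ip (F1 i) (F2 j).
Proof.
move=> SF1 SF2; rewrite ip_suml //; last exact: subspace_sum.
apply: eq_bigr => i _; rewrite ip_sumr // mulr_sumr.
by apply: eq_bigr => j _; rewrite mulrA.
Qed.

Lemma ip_ge0 f : S f -> 0 <= ip f f.
Proof.
move=> Sf; have [->|nf] := classic (f = fun _ => 0); first by rewrite ip0l //; exact: subspace0.
by apply/ltW/ip_gt0.
Qed.

Lemma orthogonal_dense_eq0 (D : (T -> V) -> Prop) f :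
  (forall p, D p -> S p) ->
  (forall eps, 0 < eps -> exists2 p, D p & ip (fun z => f z - p z) (fun z => f z - p z) < eps) ->
  S f -> (forall p, D p -> ip f p = 0) -> f = fun _ => 0.
Proof.
move=> DS dense Sf fD; apply: NNPP => nf.
have [p Dp] := dense _ (ip_gt0 Sf nf); have Sp := DS p Dp.
rewrite ipBl ?ipBr //; try exact: subspaceB.
rewrite (ip_conj Sf Sp) (fD p Dp) conjC0 !subr0 sub0r opprK gtrDl.
by move/lt_le_trans/(_ (ip_ge0 Sp)); rewrite ltxx.
Qed.

End InnerProduct.

Section MultiIndex.
Variable d : nat.

Definition mzero : mindex d := fun _ => 0%N.
Definition mincr (a : mindex d) (k : 'I_d) : mindex d := fun l => (a l + (l == k))%N.
Definition mdecr (a : mindex d) (k : 'I_d) : mindex d := fun l => (a l - (l == k))%N.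
Definition mmove (a : mindex d) (p q : 'I_d) : mindex d := mincr (mdecr a p) q.
Definition mcount (s : seq 'I_d) : mindex d := fun l => count_mem l s.

Lemma mincrK (a : mindex d) k : (0 < a k)%N -> mincr (mdecr a k) k = a.
Proof.
move=> ak; apply: functional_extensionality => l; rewrite /mincr /mdecr.
by case: eqVneq => [->|_]; rewrite ?subn1 ?addn1 ?prednK ?subn0 ?addn0.
Qed.

Lemma mmove_mincr (a : mindex d) k p q : p != k ->
  mmove (mincr a k) p q = mincr (mmove a p q) k.
Proof.
move=> pk; apply: functional_extensionality => l; rewrite /mmove /mincr /mdecr.
by case: (eqVneq l p) => [->|/negPf lp]; rewrite ?(negPf pk) ?lp ?eqxx /=; lia.
Qed.

Lemma mmove_mincr_same (a : mindex d) k q : mmove (mincr a k) k q = mincr a q.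
Proof.
by congr mincr; apply: functional_extensionality => l; rewrite /mdecr /mincr addnK.
Qed.

Lemma mmoveK (a : mindex d) p q : (0 < a p)%N -> mmove (mmove a p q) q p = a.
Proof. by move=> ap; rewrite mmove_mincr_same mincrK. Qed.

Lemma mmove_at (a : mindex d) p q : p != q -> mmove a p q q = (a q).+1.
Proof. by move=> pq; rewrite /mmove /mincr /mdecr eqxx eq_sym (negPf pq) subn0 addn1. Qed.

Lemma mdeg_mincr (a : mindex d) k : mdeg (mincr a k) = (mdeg a).+1.
Proof.
rewrite /mdeg /mincr big_split /= -addn1; congr (_ + _)%N.
by rewrite (bigD1 k) //= eqxx big1 // => l /negPf ->.
Qed.

Lemma mfact_mincr (a : mindex d) k : mfact (mincr a k) = (mfact a * (a k).+1)%N.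
Proof.
rewrite /mfact (bigD1 k) //= [in RHS](bigD1 k) //= /mincr eqxx addn1 factS.
rewrite (eq_bigr (fun l => (a l)`!)) => [|l /negPf ->]; last by rewrite addn0.
by rewrite -mulnA mulnC.
Qed.

Lemma mdeg_mmove (a : mindex d) p q : (0 < a p)%N -> mdeg (mmove a p q) = mdeg a.
Proof. by move=> ap; rewrite -{2}(mincrK ap) /mmove !mdeg_mincr. Qed.

Lemma mfact_mmove (a : mindex d) p q : p != q -> (0 < a p)%N ->
  (mfact (mmove a p q) * a p = mfact a * (a q).+1)%N.
Proof.
move=> pq ap; rewrite /mmove; set b := mdecr a p.
have b_q : b q = a q by rewrite /b /mdecr eq_sym (negPf pq) subn0.
have b_p : (b p).+1 = a p by rewrite /b /mdecr eqxx subn1 prednK.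
have fact_a : mfact a = (mfact b * a p)%N by rewrite -{1}(mincrK ap) mfact_mincr b_p.
by rewrite mfact_mincr fact_a b_q mulnAC.
Qed.

Lemma mindex_neq0 (a : mindex d) : a <> mzero -> exists k, (0 < a k)%N.
Proof.
move=> a0; apply: NNPP => no_k; apply: a0; apply: functional_extensionality => k.
by apply/eqP; rewrite -leqn0 leqNgt; apply/negP => ak; apply: no_k; exists k.
Qed.

Definition mpure (o : 'I_d) (l : nat) : mindex d := fun k => if k == o then l else 0%N.
(* All the degree on the coordinate of index 0; stated without an index so
   that it is also defined for d = 0. *)
Definition mfirst (l : nat) : mindex d := fun k => if val k == 0%N then l else 0%N.

Lemma mfirst_mpure (o : 'I_d) l : val o = 0%N -> mfirst l = mpure o l.
Proof.
move=> o0; apply: functional_extensionality => k; rewrite /mfirst /mpure.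
have [->|ko] := eqVneq k o; first by rewrite o0 eqxx.
by rewrite ifF //; apply: contraNF ko => /eqP k0; apply/eqP/val_inj; rewrite /= k0 o0.
Qed.

Lemma mpure_of_mdeg_eq (a : mindex d) o : mdeg a = a o -> a = mpure o (a o).
Proof.
rewrite /mdeg (bigD1 o) //= -[RHS]addn0 => /eqP; rewrite eqn_add2l sum_nat_eq0 => /forall_inP a0.
apply: functional_extensionality => k; rewrite /mpure.
by have [->|ko] := eqVneq k o; last by apply/eqP/a0.
Qed.

Lemma mfact_mpure o l : mfact (mpure o l) = l`!.
Proof.
rewrite /mfact (bigD1 o) //= /mpure eqxx big1 ?muln1 // => k /negPf ->.
exact: fact0.
Qed.

Lemma mcount_nil : mcount [::] = mzero.
Proof. by []. Qed.

Lemma mcount_cons k s : mcount (k :: s) = mincr (mcount s) k.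
Proof. by apply: functional_extensionality => l; rewrite /mcount /mincr /= addnC eq_sym. Qed.

Lemma mcount_surj (a : mindex d) : exists s, mcount s = a.
Proof.
exists (flatten [seq nseq (a k) k | k <- index_enum 'I_d]).
apply: functional_extensionality => l; rewrite /mcount count_flatten -map_comp sumnE big_map.
rewrite (bigD1 l) //= count_nseq /= eqxx mul1n big1 ?addn0 // => k kl.
by rewrite count_nseq /= (negPf kl).
Qed.

End MultiIndex.

Arguments mzero {d}.

Section Monomials.
Variables (R : realType) (d n : nat).
Local Notation C := R[i].
Local Notation point := (point R d).

Lemma in_ball0 : in_ball (0 : point).
Proof. by rewrite /in_ball big1 ?ltr01 // => j _; rewrite mxE normr0 expr0n. Qed.

Lemma ball_point_coord_neq0 : exists2 z : point, in_ball z & forall j, z 0 j != 0.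
Proof.
pose c : C := (d.+1)%:R^-1.
have c_gt0 : 0 < c by rewrite invr_gt0 ltr0n.
exists (const_mx c) => [|j]; last by rewrite mxE gt_eqF.
rewrite /in_ball; under eq_bigr do rewrite mxE (ger0_norm (ltW c_gt0)).
rewrite sumr_const card_ord exprVn -[_ *+ d]mulr_natl ltr_pdivrMr ?exprn_gt0 ?ltr0n //.
by rewrite mul1r -natrX ltr_nat (expnS _ 1) expn1; nia.
Qed.

Lemma zpow_mzero (z : point) : zpow z mzero = 1.
Proof. by rewrite /zpow big1 // => j _; rewrite expr0. Qed.

Lemma zpow_mincr (z : point) a k : zpow z (mincr a k) = z 0 k * zpow z a.
Proof.
rewrite /zpow (bigD1 k) //= [in RHS](bigD1 k) //= /mincr eqxx addn1 exprS -mulrA.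
by congr (_ * (_ * _)); apply: eq_bigr => l /negPf ->; rewrite addn0.
Qed.

Lemma natr_zpow_mmove (z : point) (a : mindex d) p q :
  (a p)%:R * (z 0 p * zpow z (mmove a p q)) = (a p)%:R * (z 0 q * zpow z a) :> C.
Proof.
have [->|ap] := posnP (a p); first by rewrite !mul0r.
rewrite -!zpow_mincr /mmove; congr (_ * zpow z _).
apply: functional_extensionality => l; rewrite /mincr /mdecr.
by case: eqVneq => [->|_]; rewrite ?subn0 //; lia.
Qed.

Definition linprod (u : 'M[C]_d) (s : seq 'I_d) (z : point) : C :=
  \prod_(k <- s) \sum_l u k l * z 0 l.

Lemma linprod_nil u : linprod u [::] = fun _ => 1.
Proof. by apply: functional_extensionality => z; rewrite /linprod big_nil. Qed.

Lemma linprod_cons u k s :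
  linprod u (k :: s) = fun z => (\sum_l u k l * z 0 l) * linprod u s z.
Proof. by apply: functional_extensionality => z; rewrite /linprod big_cons. Qed.

Definition tensor (q : point -> C) (xi : 'cV[C]_n) : Fun R d n :=
  ext0 (fun z => q z *: xi).

Lemma tensorD q1 q2 (xi : 'cV[C]_n) :
  tensor (fun z => q1 z + q2 z) xi = fun z => tensor q1 xi z + tensor q2 xi z.
Proof.
apply: functional_extensionality => z; rewrite /tensor /ext0.
by case: in_ball; rewrite ?scalerDl ?addr0.
Qed.

Lemma tensor_sum (I : Type) (r : seq I) (c : I -> C) (q : I -> point -> C) (xi : 'cV[C]_n) :
  tensor (fun z => \sum_(l <- r) c l * q l z) xi =
  fun z => \sum_(l <- r) c l *: tensor (q l) xi z.
Proof.
apply: functional_extensionality => z; rewrite /tensor /ext0; case: in_ball.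
  by rewrite scaler_suml; apply: eq_bigr => l _; rewrite scalerA.
by rewrite big1 // => l _; rewrite scaler0.
Qed.

Lemma Mz_tensor k q (xi : 'cV[C]_n) : Mz k (tensor q xi) = tensor (fun z => z 0 k * q z) xi.
Proof.
apply: functional_extensionality => z; rewrite /Mz /tensor /ext0.
by case: in_ball; rewrite ?scalerA ?scaler0.
Qed.

Lemma tensor_linear_mul (w : 'I_d -> C) q (xi : 'cV[C]_n) :
  tensor (fun z => (\sum_l w l * z 0 l) * q z) xi =
  fun z => \sum_l w l *: Mz l (tensor q xi) z.
Proof.
apply: functional_extensionality => z; rewrite /tensor /ext0 /Mz; case: in_ball.
  by rewrite mulr_suml scaler_suml; apply: eq_bigr => l _; rewrite !scalerA.
by rewrite big1 // => l _; rewrite !scaler0.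
Qed.

Lemma Mz_monom k (a : mindex d) (xi : 'cV[C]_n) : Mz k (monom a xi) = monom (mincr a k) xi.
Proof.
rewrite [monom a xi]/monom -/(tensor _ _) Mz_tensor /monom.
by under [fun z => _ *: xi]functional_extensionality do rewrite zpow_mincr.
Qed.

Lemma monom_decomp (a : mindex d) (xi : 'cV[C]_n) :
  monom a xi = fun z => \sum_(j < n) xi j 0 *: monom a (delta_mx j 0) z.
Proof.
apply: functional_extensionality => z; rewrite /monom /ext0; case: in_ball.
  rewrite {1}(matrix_sum_delta xi) scaler_sumr; apply: eq_bigr => j _.
  by rewrite big_ord1 !scalerA mulrC.
by rewrite big1 // => j _; rewrite scaler0.
Qed.

Lemma monom_neq0 (a : mindex d) (xi : 'cV[C]_n) : xi != 0 -> monom a xi <> fun _ => 0.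
Proof.
move=> xi0 mon0; have [z zB z0] := ball_point_coord_neq0.
have /eqP := congr1 (fun f => f z) mon0.
rewrite /monom /ext0 zB scaler_eq0 (negPf xi0) orbF; apply/negP.
by apply/prodf_neq0 => j _; rewrite expf_neq0.
Qed.

Lemma monom_mzero_at0 (xi : 'cV[C]_n) : monom (@mzero d) xi 0 = xi.
Proof. by rewrite /monom /ext0 in_ball0 zpow_mzero scale1r. Qed.

Lemma monom_at0 (a : mindex d) (xi : 'cV[C]_n) : a <> mzero -> monom a xi 0 = 0.
Proof.
move=> /mindex_neq0 [k ak]; rewrite /monom /ext0 in_ball0 /zpow (bigD1 k) //= mxE.
by rewrite expr0n gtn_eqF // mul0r scale0r.
Qed.

End Monomials.

Section Cdot.
Variables (R : realType) (n : nat).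
Local Notation C := R[i].
Implicit Types (x y : 'cV[C]_n) (A : 'M[C]_n).

Lemma cdotZl c x y : cdot (c *: x) y = c * cdot x y.
Proof. by rewrite /cdot mulr_sumr; apply: eq_bigr => k _; rewrite mxE mulrA. Qed.

Lemma cdot0l y : cdot 0 y = 0.
Proof. by rewrite -(scale0r 0) cdotZl mul0r. Qed.

Lemma conj_cdot x y : (cdot x y)^* = cdot y x.
Proof.
by rewrite /cdot rmorph_sum; apply: eq_bigr => i _; rewrite rmorphM /= conjCK mulrC.
Qed.

Lemma cdot_mulmx_adj A x y : cdot (A *m x) y = cdot x (adj A *m y).
Proof.
rewrite /cdot; under eq_bigr do rewrite mxE mulr_suml.
rewrite exchange_big; apply: eq_bigr => i _.
rewrite mxE rmorph_sum mulr_sumr; apply: eq_bigr => k _.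
by rewrite !mxE rmorphM /= conjCK mulrCA mulrA.
Qed.

Lemma posdefZ c A : 0 < c -> posdef A -> posdef (c *: A).
Proof.
move=> c_gt0 [A_herm A_pos]; have c_real : c^* = c by apply/CrealP/gtr0_real.
split.
  apply/matrixP => k l; move/matrixP: A_herm => /(_ k l).
  by rewrite !mxE rmorphM /= c_real => ->.
by move=> xi xi0; rewrite -scalemxAl cdotZl mulr_gt0 ?A_pos.
Qed.

End Cdot.

Section PolyFacts.
Variable K : numDomainType.

Lemma poly_nat_roots_eq0 (p : {poly K}) : (forall k : nat, root p k%:R) -> p = 0.
Proof.
move=> p_roots; apply/eqP; apply: contraT => p_neq0.
have := max_poly_roots p_neq0 (rs := [seq k%:R | k <- iota 0 (size p)]).
rewrite size_map size_iota ltnn; apply; first by apply/allP => _ /mapP[k _ ->].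
by rewrite map_inj_uniq ?iota_uniq // => k l /eqP; rewrite eqr_nat => /eqP.
Qed.

Lemma coef1_double_sum N (c : nat -> nat -> K) : (1 < N)%N ->
  (\sum_(0 <= m < N) \sum_(0 <= m' < N) c m m' *: 'X^(m + m'))`_1 = c 0%N 1%N + c 1%N 0%N.
Proof.
case: N => [|[|N]] // _; rewrite coef_sum.
have inner m : (\sum_(0 <= m' < N.+2) c m m' *: 'X^(m + m'))`_1 =
    if m is 0 then c 0%N 1%N else if m is 1 then c 1%N 0%N else 0.
  rewrite coef_sum big_nat_recl // big_nat_recl // big1 => [|m' _]; last first.
    by rewrite coefZ coefXn !addnS mulr0.
  by case: m => [|[|m]]; rewrite !coefZ !coefXn ?addnS //= ?mulr0 ?mulr1 ?addr0 ?add0r.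
under eq_bigr do rewrite inner.
by rewrite big_nat_recl // big_nat_recl // big1 ?addr0.
Qed.

End PolyFacts.

Section PlaneRotation.
Variables (R : realType) (d : nat) (i j : 'I_d).
Hypothesis ij : i != j.
Local Notation C := R[i].
Local Notation point := (point R d).

Let ji : j != i. Proof. by rewrite eq_sym. Qed.

Definition rot_gen : 'M[C]_d :=
  \matrix_(k, l) (((k == i) && (l == j))%:R - ((k == j) && (l == i))%:R).

Definition rot_dir (k : 'I_d) (z : point) : C := \sum_l rot_gen k l * z 0 l.

Lemma sum_plane (f : 'I_d -> C) : (forall l, l != i -> l != j -> f l = 0) ->
  \sum_l f l = f i + f j.
Proof.
move=> f0; rewrite (bigD1 i) // (bigD1 j) //= big1 ?addr0 ?addrA // => l /andP[li lj].
exact: f0.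
Qed.

Lemma sum_delta (f : 'I_d -> C) k : \sum_l (k == l)%:R * f l = f k.
Proof.
rewrite (bigD1 k) //= eqxx mul1r big1 ?addr0 // => l.
by rewrite eq_sym => /negPf ->; rewrite mul0r.
Qed.

Lemma plane_cases k : [\/ k = i, k = j | k != i /\ k != j].
Proof. by have [|ki] := eqVneq k i; [constructor 1|have [|kj] := eqVneq k j; constructor]. Qed.

Lemma rot_dir_i z : rot_dir i z = z 0 j.
Proof.
rewrite /rot_dir sum_plane => [|l li lj]; last by rewrite mxE (negPf li) (negPf lj) !andbF subrr mul0r.
by rewrite !mxE !eqxx (negPf ij) (negPf ji) /=; ring.
Qed.

Lemma rot_dir_j z : rot_dir j z = - z 0 i.
Proof.
rewrite /rot_dir sum_plane => [|l li lj]; last by rewrite mxE (negPf li) (negPf lj) !andbF subrr mul0r.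
by rewrite !mxE !eqxx (negPf ij) (negPf ji) /=; ring.
Qed.

Lemma rot_dir_out k z : k != i -> k != j -> rot_dir k z = 0.
Proof.
by move=> ki kj; rewrite /rot_dir big1 // => l _; rewrite mxE (negPf ki) (negPf kj) subr0 mul0r.
Qed.

Fixpoint rot_coef (s : seq 'I_d) (m : nat) (z : point) : C :=
  if s is k :: s' then
    z 0 k * rot_coef s' m z + (if m is m'.+1 then rot_dir k z * rot_coef s' m' z else 0)
  else (m == 0)%:R.

Lemma rot_coef_expand s x (z : point) N : (size s < N)%N ->
  \prod_(k <- s) (z 0 k + x * rot_dir k z) = \sum_(0 <= m < N) x ^+ m * rot_coef s m z.
Proof.
elim: s N => [|k s IH] [|N] //= sN.
  by rewrite big_nil big_nat_recl //= expr0 mulr1 big1 ?addr0 // => m _; rewrite mulr0.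
rewrite big_cons mulrDl {1}(IH N.+1) 1?ltnW // -mulrA (IH N) // !mulr_sumr.
rewrite [RHS]big_nat_recl // big_nat_recl //= !expr0 !mul1r addr0 -addrA; congr (_ + _).
by rewrite -big_split; apply: eq_bigr => m _ /=; rewrite exprS; ring.
Qed.

Lemma rot_coef0 s (z : point) : rot_coef s 0 z = zpow z (mcount s).
Proof.
elim: s => [|k s IH] /=; first by rewrite zpow_mzero.
by rewrite IH addr0 mcount_cons zpow_mincr.
Qed.

Lemma rot_coef1 s (z : point) : rot_coef s 1 z =
  (mcount s i)%:R * zpow z (mmove (mcount s) i j) -
  (mcount s j)%:R * zpow z (mmove (mcount s) j i).
Proof.
elim: s => [|k s IH] /=; first by rewrite !mul0r subrr.
rewrite IH rot_coef0 mcount_cons; set a := mcount s.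
case: (plane_cases k) => [->|->|[ki kj]].
- rewrite rot_dir_i mmove_mincr_same mmove_mincr // mulrBr.
  rewrite [z 0 i * (_ * _)]mulrCA natr_zpow_mmove zpow_mincr (zpow_mincr _ (mmove a j i)).
  by rewrite eqxx (negPf ij) add1n add0n -natr1; ring.
- rewrite rot_dir_j mmove_mincr_same mmove_mincr // mulrBr.
  rewrite [z 0 j * ((a j)%:R * _)]mulrCA natr_zpow_mmove !zpow_mincr.
  by rewrite eqxx (negPf ji) add1n add0n -natr1; ring.
rewrite rot_dir_out // !mmove_mincr 1?eq_sym // (zpow_mincr _ (mmove a i j)).
rewrite (zpow_mincr _ (mmove a j i)) (eq_sym i) (negPf ki) (negPf kj) !add0n.
by rewrite mul0r addr0; ring.
Qed.

Section Angle.
Variable x : C.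
Hypothesis x_ge0 : 0 <= x.

Definition rot_scale : C := (sqrtC (1 + x ^+ 2))^-1.

(* The rotation of the (z_i, z_j)-plane by the angle arctan x. *)
Definition rot : 'M[C]_d := \matrix_(k, l)
  if (k == i) || (k == j) then rot_scale * ((k == l)%:R + x * rot_gen k l) else (k == l)%:R.

Definition rot_factor (k : 'I_d) : C := if (k == i) || (k == j) then rot_scale else 1.

Lemma rot_scale_gt0 : 0 < rot_scale.
Proof. by rewrite invr_gt0 sqrtC_gt0 ltr_pwDl ?exprn_ge0. Qed.

Lemma rot_scale_sqr : rot_scale ^+ 2 * (1 + x ^+ 2) = 1.
Proof. by rewrite exprVn sqrtCK mulVf // gt_eqF // ltr_pwDl ?exprn_ge0. Qed.

Lemma rot_linear k (z : point) :
  \sum_l rot k l * z 0 l = rot_factor k * (z 0 k + x * rot_dir k z).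
Proof.
rewrite /rot_factor; under eq_bigr do rewrite mxE.
case: ifP => [_|/norP[ki kj]]; last by rewrite rot_dir_out // mulr0 addr0 mul1r sum_delta.
under eq_bigr do rewrite -mulrA mulrDl -mulrA.
by rewrite -mulr_sumr big_split /= sum_delta -mulr_sumr.
Qed.

Lemma rot_real : adj rot = rot^T.
Proof.
have x_real : x^* = x by apply/CrealP/ger0_real.
have c_real : rot_scale^* = rot_scale by apply/CrealP/gtr0_real/rot_scale_gt0.
apply/matrixP => k l; rewrite !mxE; case: ifP => _.
  by rewrite rmorphM rmorphD rmorphM rmorphB /= !rmorph_nat x_real c_real.
by rewrite rmorph_nat.
Qed.

Lemma rot_unitary : unitary_mx rot.
Proof.
suff rotK : rot *m rot^T = 1%:M by rewrite /unitary_mx rot_real rotK mulmx1C.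
apply/matrixP => k m; rewrite !mxE.
transitivity (\sum_l rot k l * (row m rot) 0 l); first by apply: eq_bigr => l _; rewrite !mxE.
rewrite rot_linear /rot_factor.
case: (plane_cases k) => [->|->|[ki kj]]; case: (plane_cases m) => [->|->|[mi mj]];
  rewrite ?rot_dir_i ?rot_dir_j ?rot_dir_out // !mxE ?eqxx ?(negPf ij) ?(negPf ji) /=;
  rewrite ?(eq_sym i) ?(eq_sym j) ?(negPf ki) ?(negPf kj) ?(negPf mi) ?(negPf mj) /=;
  try ring; try by rewrite eq_sym mulr0 addr0 mul1r.
all: by apply: (etrans _ rot_scale_sqr); ring.
Qed.

Lemma rot_factor_gt0 k : 0 < rot_factor k.
Proof. by rewrite /rot_factor; case: ifP; rewrite ?rot_scale_gt0 ?ltr01. Qed.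

Lemma linprod_rot_expand s (z : point) N : (size s < N)%N ->
  linprod rot s z = (\prod_(k <- s) rot_factor k) * \sum_(0 <= m < N) x ^+ m * rot_coef s m z.
Proof.
move=> sN; rewrite -rot_coef_expand // -big_split /=.
by apply: eq_bigr => k _; rewrite rot_linear.
Qed.

End Angle.

End PlaneRotation.

Lemma RKHS_inner_product_space (R : realType) (d n : nat)
    (S : Fun R d n -> Prop) (ip : Fun R d n -> Fun R d n -> R[i]) :
  is_RKHS_hol S ip -> inner_product_space S ip.
Proof. by case=> [[S0 S_comb _] [ip_comb ip_conj ip_pos] _ _]; split. Qed.

Section Homogeneous.
Variables (R : realType) (d n : nat).
Local Notation C := R[i].
Local Notation Fn := (Fun R d n).
Local Notation point := (point R d).
Variables (S : Fn -> Prop) (ip : Fn -> Fn -> C).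
Hypothesis hS : inner_product_space S ip.
Hypothesis hdense : poly_dense S ip.
Hypothesis kernel : exists K : point -> point -> 'M[C]_n,
  forall w : point, in_ball w -> forall xi : 'cV[C]_n,
    S (ext0 (fun z => K z w *m xi)) /\
    forall f, S f -> ip f (ext0 (fun z => K z w *m xi)) = cdot (f w) xi.
Hypothesis orth : forall (a b : mindex d) (xi eta : 'cV[C]_n), a <> b ->
  ip (monom a xi) (monom b eta) = 0.

Lemma monom_in_S (a : mindex d) xi : S (monom a xi).
Proof.
apply: hdense.1; exists [:: (a, xi)]; congr ext0.
by apply: functional_extensionality => z; rewrite big_seq1.
Qed.
#[local] Hint Resolve monom_in_S : core.

Lemma eq_of_ip_monom f g : S f -> S g ->
  (forall a zeta, ip f (monom a zeta) = ip g (monom a zeta)) -> f = g.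
Proof.
move=> Sf Sg fg.
suff fg0 : (fun z => f z - g z) = fun _ => 0.
  by apply: functional_extensionality => z; apply/eqP; rewrite -subr_eq0 (congr1 (@^~ z) fg0).
have Sfg := subspaceB hS Sf Sg.
apply: (orthogonal_dense_eq0 hS hdense.1 (hdense.2 _ Sfg) Sfg) => _ [s ->].
rewrite (_ : ext0 _ = fun z => \sum_(p <- s) 1 *: monom p.1 p.2 z); last first.
  apply: functional_extensionality => z; rewrite /monom /ext0; case: in_ball.
    by apply: eq_bigr => p _; rewrite scale1r.
  by rewrite big1 // => p _; rewrite scaler0.
by rewrite (ip_sumr hS) // big1 // => p _; rewrite (ipBl hS) ?fg ?subrr ?mulr0.
Qed.

Definition gram (a : mindex d) : 'M[C]_n :=
  \matrix_(i, j) ip (monom a (delta_mx j 0)) (monom a (delta_mx i 0)).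

Lemma ip_monom_gram (a : mindex d) xi eta :
  ip (monom a xi) (monom a eta) = cdot (gram a *m xi) eta.
Proof.
rewrite [in LHS](monom_decomp a xi) (ip_suml hS) // /cdot.
under [RHS]eq_bigr do rewrite mxE mulr_suml.
rewrite [RHS]exchange_big; apply: eq_bigr => j _.
rewrite (monom_decomp a eta) (ip_sumr hS) // mulr_sumr.
by apply: eq_bigr => i _; rewrite mxE; ring.
Qed.

Lemma gram_posdef (a : mindex d) : posdef (gram a).
Proof.
split.
  by apply/matrixP => i j; rewrite !mxE -(ip_conj hS).
by move=> xi xi0; rewrite -ip_monom_gram (ip_gt0 hS) //; exact: monom_neq0.
Qed.

Lemma gram_unit (a : mindex d) : gram a \in unitmx.
Proof.
rewrite -unitmx_tr -row_free_unit; apply: inj_row_free => v v0.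
have gv0 : gram a *m v^T = 0 by rewrite -[gram a]trmxK -trmx_mul v0 trmx0.
apply/eqP; apply: contraT; rewrite -trmx_eq0 => vT_neq0.
by have := (gram_posdef a).2 _ vT_neq0; rewrite gv0 cdot0l ltxx.
Qed.

(* The kernel at 0 is the constant (gram mzero)^-1 eta: both have the same
   inner products with all monomials. *)
Lemma ip_monom_mzero f zeta : S f ->
  ip f (monom mzero zeta) = cdot (f 0) (gram mzero *m zeta).
Proof.
have [K hK] := kernel; pose k eta := ext0 (fun z => K z 0 *m eta).
have k_monom eta : k eta = monom mzero (invmx (gram mzero) *m eta).
  have [Sk k_repr] := hK 0 (in_ball0 R d) eta.
  apply: eq_of_ip_monom => // a xi.
  rewrite (ip_conj hS) // k_repr //.
  have [->|a0] := classic (a = mzero).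
    by rewrite monom_mzero_at0 ip_monom_gram mulmxA mulmxV ?gram_unit // mul1mx conj_cdot.
  by rewrite monom_at0 // cdot0l conjC0 orth // => /esym.
have [_ k_repr] := hK 0 (in_ball0 R d) (gram mzero *m zeta).
by move=> Sf; rewrite -k_repr // -/(k _) k_monom mulmxA mulVmx ?gram_unit // mul1mx.
Qed.

Lemma ip_mzero_vanishing_at0 f xi : S f -> f 0 = 0 -> ip (monom mzero xi) f = 0.
Proof.
by move=> Sf f0; rewrite (ip_conj hS) // ip_monom_mzero // f0 cdot0l conjC0.
Qed.

Hypothesis S_Mz : forall j f, S f -> S (Mz j f).

Lemma tensor_const (c : C) (xi : 'cV[C]_n) : tensor (fun _ : point => c) xi = monom mzero (c *: xi).
Proof.
rewrite /tensor /monom; congr ext0.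
by apply: functional_extensionality => z; rewrite zpow_mzero scale1r.
Qed.

Lemma tensor_linear_mul_in_S (w : 'I_d -> C) q (xi : 'cV[C]_n) :
  (forall xi, S (tensor q xi)) ->
  S (tensor (fun z => (\sum_l w l * z 0 l) * q z) xi).
Proof.
move=> Sq; rewrite tensor_linear_mul; apply: (subspace_sum hS) => l.
exact/S_Mz/Sq.
Qed.

Lemma tensor_linprod_in_S u s (xi : 'cV[C]_n) : S (tensor (linprod u s) xi).
Proof.
elim: s xi => [|k s IH] xi; first by rewrite linprod_nil tensor_const.
by rewrite linprod_cons; exact: tensor_linear_mul_in_S.
Qed.

Section Intertwiner.
Variables (u : 'M[C]_d) (G : Fn -> Fn).
Hypothesis G_unitary : unitary_op S ip G.
Hypothesis G_intertwines : forall j f, S f ->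
  Mz j (G f) = G (fun z => \sum_k u j k *: Mz k f z).

(* The monomials of positive degree lie in the ranges of the M_{z_k}, hence of
   G M_{z_k} G^-1, so they are orthogonal to G of a constant. *)
Lemma intertwiner_const (xi : 'cV[C]_n) : G (monom mzero xi) = monom mzero (G (monom mzero xi) 0).
Proof.
have [G_S _ G_iso G_onto] := G_unitary.
apply: eq_of_ip_monom _ _ _ => // [|a zeta]; first exact: G_S.
have [->|a0] := classic (a = mzero).
  rewrite ip_monom_mzero; last exact: G_S.
  by rewrite ip_monom_gram cdot_mulmx_adj (gram_posdef mzero).1.
rewrite orth; last by move=> /esym.
have [k ak] := mindex_neq0 a0; rewrite -(mincrK ak) -Mz_monom.
have [g Sg <-] := G_onto _ (monom_in_S (mdecr a k) zeta).
have SF : S (fun z => \sum_l u k l *: Mz l g z) by apply: (subspace_sum hS) => // l; exact: S_Mz.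
rewrite G_intertwines // G_iso // ip_mzero_vanishing_at0 //.
by rewrite big1 // => l _; rewrite /Mz mxE scale0r scaler0.
Qed.

Lemma intertwiner_linprod (xi : 'cV[C]_n) s :
  G (tensor (linprod u s) xi) = monom (mcount s) (G (monom mzero xi) 0).
Proof.
have [G_S _ _ _] := G_unitary.
elim: s => [|k s IH]; first by rewrite linprod_nil tensor_const scale1r mcount_nil {1}intertwiner_const.
rewrite mcount_cons -Mz_monom -IH G_intertwines; last exact: tensor_linprod_in_S.
by rewrite linprod_cons tensor_linear_mul.
Qed.

End Intertwiner.

Hypothesis hom : Ud_homogeneous S ip.

Lemma ip_linprod_eq0 u s t (xi eta : 'cV[C]_n) : unitary_mx u -> mcount s <> mcount t ->
  ip (tensor (linprod u s) xi) (tensor (linprod u t) eta) = 0.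
Proof.
move=> u_unitary st; have [G [G_unitary G_intertwines]] := hom u_unitary.
have [_ _ G_iso _] := G_unitary.
rewrite -G_iso; try exact: tensor_linprod_in_S.
by rewrite !(intertwiner_linprod G_unitary G_intertwines) orth.
Qed.

Section Relation.
Variables (i j : 'I_d).
Hypothesis ij : i != j.
Local Notation rot_coef := (rot_coef i j).

Lemma tensor_rot_coef_in_S s m (xi : 'cV[C]_n) : S (tensor (rot_coef s m) xi).
Proof.
elim: s m xi => [|k s IH] m xi /=; first by rewrite tensor_const.
rewrite tensorD; apply: (subspaceD hS); first by rewrite -Mz_tensor; exact/S_Mz/IH.
by case: m => [|m]; [rewrite tensor_const | exact: tensor_linear_mul_in_S].
Qed.

Lemma tensor_scaled_sum (c : C) (q : nat -> point -> C) N x (xi : 'cV[C]_n) :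
  tensor (fun z => c * \sum_(0 <= m < N) x ^+ m * q m z) xi =
  fun z => \sum_(0 <= m < N) (c * x ^+ m) *: tensor (q m) xi z.
Proof.
under [fun z => _]functional_extensionality do rewrite mulr_sumr.
by under [fun z => _]functional_extensionality do under eq_bigr do rewrite mulrA; rewrite tensor_sum.
Qed.

Lemma ip_rot_coef_sum_eq0 s t N x (xi eta : 'cV[C]_n) : 0 <= x ->
  mcount s <> mcount t -> (size s < N)%N -> (size t < N)%N ->
  \sum_(0 <= m < N) \sum_(0 <= m' < N)
    x ^+ (m + m') * ip (tensor (rot_coef s m) xi) (tensor (rot_coef t m') eta) = 0.
Proof.
move=> x_ge0 st sN tN.
have := ip_linprod_eq0 xi eta (rot_unitary ij x_ge0) st.
set cs := \prod_(k <- s) rot_factor i j x k; set ct := \prod_(k <- t) rot_factor i j x k.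
have cs_gt0 : 0 < cs by apply: prodr_gt0 => k _; exact: rot_factor_gt0.
have ct_gt0 : 0 < ct by apply: prodr_gt0 => k _; exact: rot_factor_gt0.
have x_real : x^* = x by apply/CrealP/ger0_real.
have ct_real : ct^* = ct by apply/CrealP/gtr0_real.
rewrite (_ : linprod _ s = fun z => cs * \sum_(0 <= m < N) x ^+ m * rot_coef s m z); last first.
  by apply: functional_extensionality => z; rewrite (linprod_rot_expand _ _ _ _ sN).
rewrite (_ : linprod _ t = fun z => ct * \sum_(0 <= m < N) x ^+ m * rot_coef t m z); last first.
  by apply: functional_extensionality => z; rewrite (linprod_rot_expand _ _ _ _ tN).
rewrite !tensor_scaled_sum (ip_sum_sum hS); try by move=> m; exact: tensor_rot_coef_in_S.
set sum := \sum_(0 <= m < N) _; move=> /eqP.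
suff -> : sum = cs * ct * \sum_(0 <= m < N) \sum_(0 <= m' < N)
    x ^+ (m + m') * ip (tensor (rot_coef s m) xi) (tensor (rot_coef t m') eta).
  by rewrite !mulf_eq0 (gt_eqF ct_gt0) (gt_eqF cs_gt0) => /eqP.
rewrite mulr_sumr; apply: eq_bigr => m _; rewrite mulr_sumr; apply: eq_bigr => m' _.
by rewrite rmorphM rmorphXn /= ct_real x_real exprD; ring.
Qed.

Lemma ip_rot_coef01 s t (xi eta : 'cV[C]_n) : mcount s <> mcount t ->
  ip (tensor (rot_coef s 0) xi) (tensor (rot_coef t 1) eta) +
  ip (tensor (rot_coef s 1) xi) (tensor (rot_coef t 0) eta) = 0.
Proof.
move=> st; set N := (size s + size t).+2.
pose P : {poly C} := \sum_(0 <= m < N) \sum_(0 <= m' < N)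
  ip (tensor (rot_coef s m) xi) (tensor (rot_coef t m') eta) *: 'X^(m + m').
have P0 : P = 0.
  apply: poly_nat_roots_eq0 => k; apply/rootP.
  rewrite -(@ip_rot_coef_sum_eq0 s t N k%:R xi eta (ler0n _ _) st) /N; try lia.
  rewrite horner_sum; apply: eq_bigr => m _; rewrite horner_sum; apply: eq_bigr => m' _.
  by rewrite hornerZ hornerXn mulrC.
have := @coef1_double_sum _ N
  (fun m m' => ip (tensor (rot_coef s m) xi) (tensor (rot_coef t m') eta)) isT.
by rewrite -/P P0 coef0 => <-.
Qed.

Lemma tensor_rot_coef0 s (xi : 'cV[C]_n) : tensor (rot_coef s 0) xi = monom (mcount s) xi.
Proof.
by rewrite /tensor /monom; congr ext0; apply: functional_extensionality => z; rewrite rot_coef0.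
Qed.

Lemma tensor_rot_coef1 s (xi : 'cV[C]_n) : tensor (rot_coef s 1) xi =
  fun z => (mcount s i)%:R *: monom (mmove (mcount s) i j) xi z -
           (mcount s j)%:R *: monom (mmove (mcount s) j i) xi z.
Proof.
apply: functional_extensionality => z; rewrite /tensor /monom /ext0; case: in_ball.
  by rewrite (rot_coef1 ij) scalerBl !scalerA.
by rewrite !scaler0 subrr.
Qed.

Lemma ip_monom_mmove (a : mindex d) (xi eta : 'cV[C]_n) : (0 < a j)%N ->
  (a i).+1%:R * ip (monom a xi) (monom a eta) =
  (a j)%:R * ip (monom (mmove a j i) xi) (monom (mmove a j i) eta).
Proof.
move=> aj; set b := mmove a j i.
have [s sa] := mcount_surj a; have [t tb] := mcount_surj b.
have b_i : b i = (a i).+1 by rewrite /b mmove_at // eq_sym.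
have sb : mcount s <> mcount t by rewrite sa tb => /(congr1 (@^~ i)); rewrite b_i; lia.
have := ip_rot_coef01 xi eta sb.
rewrite !tensor_rot_coef0 !tensor_rot_coef1 sa tb mmoveK //.
have SZm c b' zeta := subspaceZ hS c (monom_in_S b' zeta).
rewrite (ipBr hS) ?(ipZr hS) ?(ipBl hS) ?(ipZl hS) //.
rewrite [ip (monom a xi) (monom (mmove b j i) eta)]orth; last first.
  by move=> /(congr1 (@^~ i)); rewrite mmove_at 1?eq_sym // -/b b_i; lia.
rewrite [ip (monom (mmove a i j) xi) (monom b eta)]orth; last first.
  by move=> /(congr1 (@^~ j)); rewrite mmove_at // /b /mmove /mincr /mdecr eqxx [j == i]eq_sym (negPf ij); lia.
rewrite !rmorph_nat b_i !mulr0 subr0 add0r => /eqP; rewrite subr_eq0 => /eqP.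
by rewrite -/b.
Qed.

End Relation.

Lemma ip_monom_mpure (o : 'I_d) (a : mindex d) (xi eta : 'cV[C]_n) :
  (mdeg a)`!%:R * ip (monom a xi) (monom a eta) =
  (mfact a)%:R * ip (monom (mpure o (mdeg a)) xi) (monom (mpure o (mdeg a)) eta).
Proof.
move: {2}(mdeg a - a o)%N (erefl (mdeg a - a o)%N) => m.
elim: m a => [|m IH] a am.
  have deg_a : mdeg a = a o.
    by apply/eqP; rewrite eqn_leq -subn_eq0 am /mdeg (bigD1 o) //= leq_addr.
  have pure_a := mpure_of_mdeg_eq deg_a.
  have fact_a : mfact a = (a o)`! by rewrite {1}pure_a mfact_mpure.
  by rewrite fact_a deg_a -pure_a mulrC.
have [k ko ak] : exists2 k, k != o & (0 < a k)%N.
  apply: NNPP => no_k; move: am; suff -> : mdeg a = a o by rewrite subnn.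
  rewrite /mdeg (bigD1 o) //= big1 ?addn0 // => k ko; apply/eqP; rewrite -leqn0 leqNgt.
  by apply/negP => ak; apply: no_k; exists k.
have ok : o != k by rewrite eq_sym.
have deg_b := mdeg_mmove o ak.
have IHb := IH (mmove a k o); rewrite deg_b mmove_at // in IHb.
apply: (mulfI (x := (a o).+1%:R)); first by rewrite pnatr_eq0.
rewrite mulrCA (ip_monom_mmove ok) // mulrCA IHb; last by lia.
by rewrite !mulrA -!natrM [(a k * _)%N]mulnC mfact_mmove // mulnC.
Qed.

Lemma ip_monom_mfirst (a : mindex d) (xi eta : 'cV[C]_n) :
  ip (monom a xi) (monom a eta) = (mfact a)%:R / (mdeg a)`!%:R *
    ip (monom (mfirst (mdeg a)) xi) (monom (mfirst (mdeg a)) eta).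
Proof.
have [d0|d_gt0] := posnP d.
  have no_index (k : 'I_d) : False by move: (ltn_ord k); rewrite {2}d0.
  have -> : mfirst (mdeg a) = a by apply: functional_extensionality => k; case: (no_index k).
  by rewrite /mfact /mdeg !big1 ?fact0 ?divr1 ?mul1r // => k; case: (no_index k).
pose o := Ordinal d_gt0; rewrite (mfirst_mpure _ (erefl : val o = 0%N)).
have fact_neq0 : (mdeg a)`!%:R != 0 :> C by rewrite pnatr_eq0 -lt0n fact_gt0.
apply: (mulfI fact_neq0); rewrite (ip_monom_mpure o); field.
by rewrite fact_neq0.
Qed.

End Homogeneous.

Theorem theorem4p10 (R : realType) (d n : nat)
  (S : Fun R d n -> Prop) (ip : Fun R d n -> Fun R d n -> R[i])
  (HS : is_RKHS_hol S ip)
  (Hdense : poly_dense S ip)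
  (Horth : forall (a b : mindex d) (xi eta : 'cV[R[i]]_n), a <> b ->
     ip (monom a xi) (monom b eta) = 0)
  (Hbdd : M_bounded S ip)
  (Hhom : Ud_homogeneous S ip) :
  exists A : nat -> 'M[R[i]]_n,
    (forall l, posdef (A l)) /\
    forall (a : mindex d) (xi : 'cV[R[i]]_n),
      ip (monom a xi) (monom a xi) = (mfact a)%:R * cdot (A (mdeg a) *m xi) xi.
Proof.
have hS := RKHS_inner_product_space HS; have [_ _ _ kernel] := HS.
have S_Mz j : forall f, S f -> S (Mz j f) := (Hbdd j).1.
exists (fun l => l`!%:R^-1 *: gram ip (mfirst l)); split => [l|a xi].
  by apply: posdefZ; [rewrite invr_gt0 ltr0n fact_gt0 | exact: (gram_posdef hS Hdense)].
rewrite -scalemxAl cdotZl -(ip_monom_gram hS Hdense) mulrA.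
exact: (ip_monom_mfirst hS Hdense kernel Horth S_Mz Hhom).
Qed.
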